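(* Let $n\geq 2$ and let $(x_i,y_i)_{i=1}^n$ be labeled examples with $x_i\in\mathbb{R}^d$, $y_i\in\{-1,+1\}$, $\max_i\|x_i\|\leq 1$. Let $Q\in\mathbb{R}^{n\times n}$ with $Q_{ij} = y_iy_j\langle x_i,x_j\rangle$, let $\sigma^2 \geq \frac{1}{n}\|Q\|$ (spectral norm), $\lambda>0$, $b\in\{1,\dots,n\}$ and $\beta_b := 1+\frac{(b-1)(n\sigma^2-1)}{n-1}$. For $\alpha,\delta\in\mathbb{R}^n$ define $$D(\alpha) := -\frac{1}{2\lambda n^2}\alpha^\top Q\alpha + \frac{1}{n}\sum_{i=1}^n\alpha_i,$$ $$H(\delta,\alpha) := -\frac{\alpha^\top Q\alpha + 2\alpha^\top Q\delta + \beta_b\|\delta\|^2}{2\lambda n^2} + \sum_{i=1}^n\frac{\alpha_i+\delta_i}{n}.$$ Then for any $\alpha,\delta\in\mathbb{R}^n$, if $A$ is drawn uniformly at random among subsets of $\{1,\dots,n\}$ of cardinality $b$, $$\mathbb{E}_A\big[D(\alpha+\delta_{[A]})\big] \geq \Big(1-\frac{b}{n}\Big)D(\alpha) + \frac{b}{n}H(\delta,\alpha),$$ where $\delta_{[A]}\in\mathbb{R}^n$ agrees with $\delta$ on coordinates in $A$ and is zero elsewhere.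
   Context: $D$ is the (unconstrained expression of the) SVM dual objective; $\|Q\|$ is the spectral norm of $Q$. *)

From HB Require Import structures.
From mathcomp Require Import all_boot all_order all_algebra.
From mathcomp Require Import classical_sets reals.
Set Implicit Arguments. Unset Strict Implicit. Unset Printing Implicit Defensive.
Import Order.TTheory GRing.Theory Num.Theory.
Local Open Scope ring_scope.
Local Open Scope classical_set_scope.

Section SVM.
Variable R : realType.

Definition dotr (d : nat) (u v : 'rV[R]_d) : R := \sum_(k < d) u 0 k * v 0 k.
Definition normr2 (d : nat) (u : 'rV[R]_d) : R := Num.sqrt (dotr u u).

Definition vnorm (n : nat) (v : 'cV[R]_n) : R := Num.sqrt (\sum_(i < n) v i 0 ^+ 2).

Definition spec_norm (n : nat) (M : 'M[R]_n) : R :=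
  sup [set vnorm (M *m v) | v in [set v : 'cV[R]_n | vnorm v <= 1]].

Definition Qmat (n d : nat) (x : 'I_n -> 'rV[R]_d) (y : 'I_n -> R) : 'M[R]_n :=
  \matrix_(i, j) (y i * y j * dotr (x i) (x j)).

Definition qform (n : nat) (M : 'M[R]_n) (u v : 'cV[R]_n) : R := (u^T *m M *m v) 0 0.

Definition Dobj (n : nat) (Q : 'M[R]_n) (lam : R) (a : 'cV[R]_n) : R :=
  - (qform Q a a) / (2 * lam * n%:R ^+ 2) + (\sum_(i < n) a i 0) / n%:R.

Definition beta_b (n b : nat) (sigma : R) : R :=
  1 + (b.-1)%:R * (n%:R * sigma ^+ 2 - 1) / (n.-1)%:R.

Definition Hobj (n : nat) (Q : 'M[R]_n) (lam beta : R) (del a : 'cV[R]_n) : R :=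
  - (qform Q a a + 2 * qform Q a del + beta * vnorm del ^+ 2) / (2 * lam * n%:R ^+ 2)
  + \sum_(i < n) (a i 0 + del i 0) / n%:R.

Definition restrict (n : nat) (del : 'cV[R]_n) (A : {set 'I_n}) : 'cV[R]_n :=
  \col_i (if i \in A then del i 0 else 0).

Definition E_subsets (n b : nat) (f : {set 'I_n} -> R) : R :=
  (\sum_(A : {set 'I_n} | #|A| == b) f A) / 'C(n, b)%:R.

End SVM.

(* A coordinate i lies in the uniformly random b-subset A with probability b/n, and a pair
   i <> j with probability b(b-1)/(n(n-1)).  So the linear part of D(alpha + delta_[A]) averages
   to b/n times that of delta, while the quadratic term delta_[A]^T Q delta_[A] averages to
   b/n ((b-1) delta^T Q delta + (n-b) sum_i Q_ii delta_i^2) / (n-1).  Bounding delta^T Q delta by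
   ||Q|| |delta|^2 <= n sigma^2 |delta|^2 and Q_ii = |x_i|^2 by 1 turns this into
   b/n beta_b |delta|^2, which is exactly the quadratic part of H. *)

From HB Require Import structures.
(* Loaded first so that finset's lemmas shadow their classical_sets homonyms. *)
From mathcomp Require Import classical_sets reals.
From mathcomp Require Import all_boot all_order all_algebra.
From mathcomp Require Import ring lra zify.
Set Implicit Arguments. Unset Strict Implicit. Unset Printing Implicit Defensive.
Import Order.TTheory GRing.Theory Num.Theory.

Section KSupsets.
Variable T : finType.

Definition ksupsets (k : nat) (C : {set T}) : {set {set T}} :=
  [set A : {set T} | C \subset A & #|A| == k].

Lemma in_ksupsets k C A : (A \in ksupsets k C) = (C \subset A) && (#|A| == k).
Proof. by rewrite inE. Qed.

Lemma setU_setD (A C : {set T}) : C \subset A -> C :|: A :\: C = A.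
Proof. by move=> sCA; rewrite -{1}(setIidPr sCA) setID. Qed.

(* [A |-> A :\: C] is a bijection onto the [(k - #|C|)]-subsets of [~: C]. *)
Lemma card_ksupsets k (C : {set T}) : #|C| <= k ->
  #|ksupsets k C| = 'C(#|T| - #|C|, k - #|C|).
Proof.
move=> leCk; rewrite -[in #|T|](cardsC C) addKn -cards_draws.
have -> : [set B : {set T} | B \subset ~: C & #|B| == k - #|C|] =
    (fun A => A :\: C) @: ksupsets k C.
  apply/setP=> B; rewrite inE; apply/andP/imsetP => [[sBC /eqP cardB] | [A]].
    have dBC : B :&: C = set0 by apply/disjoint_setI0; rewrite disjoints_subset.
    exists (C :|: B).
      by rewrite in_ksupsets subsetUl cardsU setIC dBC cards0 subn0 cardB subnKC ?eqxx.
    by rewrite setDUl setDv set0U; apply/esym/setDidPl; rewrite disjoints_subset.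
  rewrite in_ksupsets => /andP[sCA /eqP cardA] ->.
  by rewrite {1}setDE subsetIr cardsDS // cardA.
rewrite card_in_imset // => A1 A2; rewrite !in_ksupsets => /andP[sCA1 _] /andP[sCA2 _] eqD.
by rewrite -(setU_setD sCA1) eqD setU_setD.
Qed.

Lemma card_ksupsets1 k (i : T) : 0 < k -> #|ksupsets k [set i]| = 'C(#|T|.-1, k.-1).
Proof. by move=> k_gt0; rewrite card_ksupsets cards1 ?subn1. Qed.

Lemma card_ksupsets2 k (i j : T) : 0 < k <= #|T| ->
  #|T|.-1 * #|ksupsets k [set i; j]| = 'C(#|T|.-1, k.-1) * (k.-1 + (i == j) * (#|T| - k)).
Proof.
move=> /andP[k_gt0 lekT]; have [<- | neq_ij] := eqVneq i j.
  by rewrite setUid card_ksupsets1 // mul1n mulnC; congr (_ * _); lia.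
rewrite mul0n addn0; case: k k_gt0 lekT => [|[|k]] // _ leSkT.
  rewrite muln0 eq_card0 ?muln0 // => A; rewrite in_ksupsets.
  apply/negbTE; apply: contraTN isT => /andP[sA /eqP cardA].
  by have := subset_leq_card sA; rewrite cardA cards2 neq_ij.
rewrite card_ksupsets cards2 neq_ij //=.
have -> : (#|T| - 2 = #|T|.-1.-1)%N by lia.
by rewrite subn2 mul_bin_diag mulnC.
Qed.

End KSupsets.

Local Open Scope ring_scope.

Lemma sum_ksubsets_if (V : nmodType) (T : finType) k (C : {set T}) (c : V) :
  \sum_(A : {set T} | #|A| == k) (if C \subset A then c else 0) = c *+ #|ksupsets k C|.
Proof. by rewrite -big_mkcondr -sumr_const; apply: eq_bigl => A; rewrite in_ksupsets andbC. Qed.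

Lemma sum_ksubsets_const (V : nmodType) (T : finType) k (c : V) :
  \sum_(A : {set T} | #|A| == k) c = c *+ 'C(#|T|, k).
Proof. by rewrite -card_draws -sumr_const; apply: eq_bigl => A; rewrite inE. Qed.

Section Vectors.
Variable R : realType.

Lemma sumr_sqr_ge0 n (f : 'I_n -> R) : 0 <= \sum_i f i ^+ 2.
Proof. by apply: sumr_ge0 => i _; apply: sqr_ge0. Qed.

Lemma CauchySchwarz_sum n (a c : 'I_n -> R) :
  (\sum_i a i * c i) ^+ 2 <= (\sum_i a i ^+ 2) * (\sum_i c i ^+ 2).
Proof.
set A := \sum_i a i ^+ 2; set B := \sum_i c i ^+ 2; set C := \sum_i a i * c i.
have lagrange : \sum_i \sum_j (a i * c j - a j * c i) ^+ 2 = 2 * (A * B - C ^+ 2).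
  have inner i : \sum_j (a i * c j - a j * c i) ^+ 2 =
      a i ^+ 2 * B + c i ^+ 2 * A - 2 * (a i * c i) * C.
    by rewrite /A /B /C !mulr_sumr -big_split -sumrB; apply: eq_bigr => j _ /=; ring.
  under eq_bigr do rewrite inner.
  by rewrite sumrB big_split /= -!mulr_suml -mulr_sumr -/A -/B -/C; ring.
have : 0 <= \sum_i \sum_j (a i * c j - a j * c i) ^+ 2.
  by apply: sumr_ge0 => i _; apply: sumr_sqr_ge0.
by rewrite lagrange pmulr_rge0 // subr_ge0.
Qed.

Lemma vnorm_sqr n (v : 'cV[R]_n) : vnorm v ^+ 2 = \sum_i v i 0 ^+ 2.
Proof. by rewrite sqr_sqrtr ?sumr_sqr_ge0. Qed.

Lemma vnorm_ge0 n (v : 'cV[R]_n) : 0 <= vnorm v.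
Proof. exact: sqrtr_ge0. Qed.

Lemma vnormZ n (c : R) (v : 'cV[R]_n) : vnorm (c *: v) = `|c| * vnorm v.
Proof.
rewrite /vnorm -sqrtr_sqr -sqrtrM ?sqr_ge0 // mulr_sumr.
by congr Num.sqrt; apply: eq_bigr => i _; rewrite mxE exprMn.
Qed.

Lemma sum_mul_le_vnorm n (u v : 'cV[R]_n) : \sum_i u i 0 * v i 0 <= vnorm u * vnorm v.
Proof.
rewrite /vnorm -sqrtrM ?sumr_sqr_ge0 // (le_trans (ler_norm _)) //.
by rewrite -sqrtr_sqr ler_sqrt ?CauchySchwarz_sum // mulr_ge0 ?sumr_sqr_ge0.
Qed.

Lemma vnorm_mulmx_sqr_le n (M : 'M[R]_n) (v : 'cV[R]_n) :
  vnorm (M *m v) ^+ 2 <= (\sum_i \sum_j M i j ^+ 2) * vnorm v ^+ 2.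
Proof.
rewrite !vnorm_sqr mulr_suml; apply: ler_sum => i _; rewrite mxE.
exact: CauchySchwarz_sum (fun j => M i j) (fun j => v j 0).
Qed.

Lemma spec_norm_has_sup n (M : 'M[R]_n) :
  has_sup [set vnorm (M *m v) | v in [set v : 'cV[R]_n | vnorm v <= 1]].
Proof.
split.
  by exists (vnorm (M *m 0)), 0 => //=; rewrite /vnorm big1 ?sqrtr0 // => i _; rewrite mxE expr0n.
exists (Num.sqrt (\sum_i \sum_j M i j ^+ 2)) => _ [v /= le_v1 <-].
have frob_ge0 : 0 <= \sum_i \sum_j M i j ^+ 2 by apply: sumr_ge0 => i _; apply: sumr_sqr_ge0.
rewrite -(ger0_norm (vnorm_ge0 (M *m v))) -sqrtr_sqr ler_sqrt //.
by rewrite (le_trans (vnorm_mulmx_sqr_le _ _)) // ler_piMr // expr_le1 ?vnorm_ge0.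
Qed.

Lemma vnorm_mulmx_le n (M : 'M[R]_n) (v : 'cV[R]_n) :
  vnorm (M *m v) <= spec_norm M * vnorm v.
Proof.
have [v0 | v_gt0] := eqVneq (vnorm v) 0.
  have := vnorm_mulmx_sqr_le M v; rewrite v0 expr0n mulr0.
  by have := vnorm_ge0 (M *m v); nra.
have {}v_gt0 : 0 < vnorm v by rewrite lt_def v_gt0 vnorm_ge0.
have unit_v : vnorm ((vnorm v)^-1 *: v) <= 1.
  by rewrite vnormZ ger0_norm ?invr_ge0 ?vnorm_ge0 // mulVf ?gt_eqF.
have : vnorm (M *m ((vnorm v)^-1 *: v)) <= spec_norm M.
  by apply: (sup_upper_bound (spec_norm_has_sup M)); exists ((vnorm v)^-1 *: v).
by rewrite -scalemxAr vnormZ ger0_norm ?invr_ge0 ?vnorm_ge0 // mulrC ler_pdivrMr.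
Qed.

Lemma qform_le_spec_norm n (M : 'M[R]_n) (v : 'cV[R]_n) :
  qform M v v <= spec_norm M * vnorm v ^+ 2.
Proof.
have -> : qform M v v = \sum_i v i 0 * (M *m v) i 0.
  by rewrite /qform -mulmxA mxE; apply: eq_bigr => i _; rewrite mxE.
rewrite (le_trans (sum_mul_le_vnorm _ _)) // mulrC expr2 mulrA.
by rewrite ler_wpM2r ?vnorm_ge0 ?vnorm_mulmx_le.
Qed.

Lemma qformE n (M : 'M[R]_n) u v : qform M u v = \sum_i \sum_j u i 0 * M i j * v j 0.
Proof.
rewrite /qform mxE; under eq_bigr do rewrite mxE big_distrl /=.
by rewrite exchange_big; apply: eq_bigr => i _; apply: eq_bigr => j _; rewrite !mxE.
Qed.

Lemma qform_tr n (M : 'M[R]_n) u v : qform M u v = qform M^T v u.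
Proof.
have trE (X : 'M[R]_1) : X 0 0 = X^T 0 0 by rewrite mxE.
by rewrite /qform trE !trmx_mul trmxK mulmxA.
Qed.

Lemma qformDl n (M : 'M[R]_n) u1 u2 v : qform M (u1 + u2) v = qform M u1 v + qform M u2 v.
Proof. by rewrite /qform linearD /= !mulmxDl [LHS]mxE. Qed.

Lemma qformDr n (M : 'M[R]_n) u v1 v2 : qform M u (v1 + v2) = qform M u v1 + qform M u v2.
Proof. by rewrite /qform mulmxDr [LHS]mxE. Qed.

Lemma qform_sqrD n (M : 'M[R]_n) a u : M^T = M ->
  qform M (a + u) (a + u) = qform M a a + 2 * qform M a u + qform M u u.
Proof.
move=> symM; rewrite !qformDl !qformDr [qform M u a]qform_tr symM; ring.
Qed.

Lemma qform_sumr n (M : 'M[R]_n) u I (r : seq I) (P : pred I) (F : I -> 'cV[R]_n) :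
  \sum_(i <- r | P i) qform M u (F i) = qform M u (\sum_(i <- r | P i) F i).
Proof. by rewrite /qform mulmx_sumr summxE. Qed.

Lemma qformMnr n (M : 'M[R]_n) u v m : qform M u (v *+ m) = qform M u v *+ m.
Proof. by rewrite /qform -scaler_nat -scalemxAr mxE mulr_natl. Qed.

End Vectors.

Section RandomBlock.
Variables (R : realType) (n k : nat).
Hypothesis k_gt0 : (0 < k)%N.

Lemma sum_restrict (v : 'cV[R]_n) :
  \sum_(A : {set 'I_n} | #|A| == k) restrict v A = v *+ 'C(n.-1, k.-1).
Proof.
apply/matrixP => i j; rewrite (ord1 j) summxE mulmxnE.
under eq_bigr do rewrite mxE -sub1set.
by rewrite sum_ksubsets_if card_ksupsets1 ?card_ord.
Qed.

Lemma sum_qform_restrict (M : 'M[R]_n) (v : 'cV[R]_n) : (k <= n)%N ->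
  (n.-1)%:R * \sum_(A : {set 'I_n} | #|A| == k) qform M (restrict v A) (restrict v A)
  = 'C(n.-1, k.-1)%:R * ((k.-1)%:R * qform M v v + (n - k)%:R * \sum_i M i i * v i 0 ^+ 2).
Proof.
move=> le_kn; set c1 := 'C(n.-1, k.-1).
have pair_count (i j : 'I_n) :
    (n.-1 * #|ksupsets k [set i; j]| = c1 * (k.-1 + (i == j) * (n - k)))%N.
  by have := @card_ksupsets2 _ k i j; rewrite card_ord k_gt0 le_kn; apply.
have pair_sum (i j : 'I_n) :
    \sum_(A : {set 'I_n} | #|A| == k) restrict v A i 0 * M i j * restrict v A j 0
    = v i 0 * M i j * v j 0 *+ #|ksupsets k [set i; j]|.
  rewrite -sum_ksubsets_if; apply: eq_bigr => A _; rewrite !mxE subUset !sub1set.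
  by case: (i \in A); case: (j \in A); rewrite ?mulr0 ?mul0r.
have diag_sum (i : 'I_n) (F : 'I_n -> R) : \sum_j F j * (i == j)%:R = F i.
  rewrite (bigD1 i) //= eqxx mulr1 big1 ?addr0 // => j.
  by rewrite eq_sym => /negPf ->; rewrite mulr0.
under eq_bigr do rewrite qformE.
rewrite exchange_big qformE mulr_sumr; under eq_bigr do rewrite exchange_big.
rewrite mulr_sumr [k.-1%:R * _]mulr_sumr -big_split mulr_sumr /=; apply: eq_bigr => i _.
have -> : (n - k)%:R * (M i i * v i 0 ^+ 2) =
    \sum_j v i 0 * M i j * v j 0 * (n - k)%:R * (i == j)%:R by rewrite diag_sum; ring.
rewrite mulr_sumr [k.-1%:R * _]mulr_sumr -big_split mulr_sumr /=; apply: eq_bigr => j _.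
rewrite pair_sum -[_ *+ #|_|]mulr_natr mulrCA -natrM pair_count natrM natrD natrM; ring.
Qed.

End RandomBlock.

Section DualObjective.
Variables (R : realType) (n : nat).

Lemma DobjD (M : 'M[R]_n) lam a u : M^T = M ->
  Dobj M lam (a + u) = Dobj M lam a
    - (2 * qform M a u + qform M u u) / (2 * lam * n%:R ^+ 2) + (\sum_i u i 0) / n%:R.
Proof.
move=> symM; rewrite /Dobj qform_sqrD //.
by under eq_bigr do rewrite mxE; rewrite big_split /=; ring.
Qed.

Lemma HobjE (M : 'M[R]_n) lam beta del a :
  Hobj M lam beta del a = Dobj M lam a
    - (2 * qform M a del + beta * vnorm del ^+ 2) / (2 * lam * n%:R ^+ 2)
    + (\sum_i del i 0) / n%:R.
Proof. by rewrite /Hobj /Dobj -mulr_suml big_split /=; ring. Qed.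

Variable k : nat.
Hypothesis k_gt0 : (0 < k)%N.
Hypothesis le_kn : (k <= n)%N.

Lemma natr_binomial_neq0 : 'C(n, k)%:R != 0 :> R.
Proof. by rewrite pnatr_eq0 -lt0n bin_gt0. Qed.

Lemma binomial_ratio : 'C(n.-1, k.-1)%:R = k%:R / n%:R * 'C(n, k)%:R :> R.
Proof.
have n_gt0 : (0 < n)%N by apply: leq_trans le_kn.
have := mul_bin_diag n k.-1; rewrite prednK // => /(congr1 (GRing.natmul (1 : R))).
by rewrite !natrM => eq_c; rewrite mulrAC -eq_c mulrC mulKf // pnatr_eq0 -lt0n.
Qed.

Lemma E_subsets_Dobj_restrict (M : 'M[R]_n) lam a v : M^T = M ->
  E_subsets k (fun A => Dobj M lam (a + restrict v A))
  = Dobj M lam a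
    - (2 * (k%:R / n%:R) * qform M a v
       + E_subsets k (fun A => qform M (restrict v A) (restrict v A))) / (2 * lam * n%:R ^+ 2)
    + k%:R / n%:R * (\sum_i v i 0) / n%:R.
Proof.
move=> symM; rewrite /E_subsets; under eq_bigr do rewrite DobjD //.
move: (Dobj M lam a) (2 * lam * n%:R ^+ 2) => D K.
rewrite !big_split /= sumrN sum_ksubsets_const card_ord -!mulr_suml big_split /=.
rewrite -mulr_sumr qform_sumr sum_restrict // qformMnr exchange_big /=.
have -> : \sum_j \sum_(A : {set 'I_n} | #|A| == k) restrict v A j 0
    = (\sum_j v j 0) *+ 'C(n.-1, k.-1).
  by rewrite -sumrMnl; apply: eq_bigr => j _; rewrite -summxE sum_restrict // mulmxnE.
rewrite -[D *+ _]mulr_natr -[qform M a v *+ _]mulr_natr -[(\sum_j v j 0) *+ _]mulr_natr.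
rewrite binomial_ratio.
move: ('C(n, k)%:R) natr_binomial_neq0 (K^-1) (n%:R^-1) => N N_neq0 Ki ni.
by field.
Qed.

Hypothesis n_gt1 : (1 < n)%N.

Lemma natr_predn_gt0 : 0 < (n.-1)%:R :> R.
Proof. by rewrite ltr0n -ltnS prednK // ltnW. Qed.

Lemma E_subsets_qform_restrict (M : 'M[R]_n) v :
  E_subsets k (fun A => qform M (restrict v A) (restrict v A))
  = k%:R / n%:R * ((k.-1)%:R * qform M v v + (n - k)%:R * \sum_i M i i * v i 0 ^+ 2)
    / (n.-1)%:R.
Proof.
have n1_neq0 := lt0r_neq0 natr_predn_gt0.
rewrite /E_subsets -[\sum_(A | _) _](mulKf n1_neq0) sum_qform_restrict // binomial_ratio.
move: ('C(n, k)%:R) natr_binomial_neq0 (n%:R^-1) => N N_neq0 ni.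
by field; rewrite n1_neq0 N_neq0.
Qed.

Lemma E_subsets_qform_restrict_le (M : 'M[R]_n) v sigma :
  (forall i, M i i <= 1) -> spec_norm M / n%:R <= sigma ^+ 2 ->
  E_subsets k (fun A => qform M (restrict v A) (restrict v A))
  <= k%:R / n%:R * beta_b n k sigma * vnorm v ^+ 2.
Proof.
move=> diag_le1 spec_le; rewrite E_subsets_qform_restrict.
have n_gt0 : 0 < n%:R :> R by rewrite ltr0n ltnW.
have qform_le : qform M v v <= n%:R * sigma ^+ 2 * vnorm v ^+ 2.
  rewrite (le_trans (qform_le_spec_norm M v)) // ler_wpM2r ?sqr_ge0 // mulrC.
  by rewrite -ler_pdivrMr.
have diag_le : \sum_i M i i * v i 0 ^+ 2 <= vnorm v ^+ 2.
  by rewrite vnorm_sqr; apply: ler_sum => i _; rewrite ler_piMl ?sqr_ge0.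
have -> : k%:R / n%:R * beta_b n k sigma * vnorm v ^+ 2 = k%:R / n%:R
    * ((k.-1)%:R * (n%:R * sigma ^+ 2 * vnorm v ^+ 2) + (n - k)%:R * vnorm v ^+ 2) / (n.-1)%:R.
  have natr_pred (m : nat) : (0 < m)%N -> (m.-1)%:R = m%:R - 1 :> R.
    by move=> m_gt0; rewrite -subn1 natrB.
  have n1_neq0 := lt0r_neq0 natr_predn_gt0.
  rewrite /beta_b natrB // !natr_pred ?(ltnW n_gt1) // in n1_neq0 *.
  by field; rewrite n1_neq0 lt0r_neq0.
rewrite ler_pM2r ?invr_gt0 ?natr_predn_gt0 // ler_wpM2l ?divr_ge0 //.
by rewrite lerD // ler_wpM2l.
Qed.

End DualObjective.

Section Kernel.
Variables (R : realType) (n d : nat) (x : 'I_n -> 'rV[R]_d) (y : 'I_n -> R).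

Lemma Qmat_tr : (Qmat x y)^T = Qmat x y.
Proof.
apply/matrixP => i j; rewrite !mxE /dotr [y j * y i]mulrC.
by congr (_ * _); apply: eq_bigr => l _; rewrite mulrC.
Qed.

Lemma Qmat_diag_le1 : (forall i, y i = 1 \/ y i = -1) ->
  (forall i, normr2 (x i) <= 1) -> forall i, Qmat x y i i <= 1.
Proof.
move=> y_pm1 x_le1 i; have y2 : y i * y i = 1 by case: (y_pm1 i) => ->; rewrite ?mulrNN mulr1.
have dot_ge0 : 0 <= dotr (x i) (x i) by apply: sumr_ge0 => l _; rewrite -expr2 sqr_ge0.
by have := x_le1 i; rewrite mxE y2 mul1r /normr2 -{1}sqrtr1 ler_sqrt.
Qed.

End Kernel.

Theorem lemma3 (R : realType) (n d : nat) (x : 'I_n -> 'rV[R]_d) (y : 'I_n -> R)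
  (sigma lam : R) (b : nat) :
  (2 <= n)%N ->
  (forall i, y i = 1 \/ y i = -1) ->
  (forall i, normr2 (x i) <= 1) ->
  spec_norm (Qmat x y) / n%:R <= sigma ^+ 2 ->
  0 < lam ->
  (1 <= b <= n)%N ->
  forall alpha delta : 'cV[R]_n,
    E_subsets b (fun A => Dobj (Qmat x y) lam (alpha + restrict delta A))
    >= (1 - b%:R / n%:R) * Dobj (Qmat x y) lam alpha
       + b%:R / n%:R * Hobj (Qmat x y) lam (beta_b n b sigma) delta alpha.
Proof.
move=> n_gt1 y_pm1 x_le1 spec_le lam_gt0 /andP[b_gt0 le_bn] alpha delta.
have n_gt0 : 0 < n%:R :> R by rewrite ltr0n ltnW.
have K_gt0 : 0 < 2 * lam * n%:R ^+ 2 by apply: mulr_gt0; [exact: mulr_gt0 | exact: exprn_gt0].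
have := E_subsets_qform_restrict_le b_gt0 le_bn n_gt1 delta (Qmat_diag_le1 y_pm1 x_le1) spec_le.
rewrite E_subsets_Dobj_restrict ?Qmat_tr // HobjE.
set E := E_subsets _ _; set K := 2 * lam * _; set p := b%:R / n%:R.
move=> E_le; rewrite -subr_ge0 (_ : _ - _ = (p * beta_b n b sigma * vnorm delta ^+ 2 - E) / K).
  by rewrite divr_ge0 ?subr_ge0 // ltW.
by ring.
Qed.
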